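(* Let $\mathcal{R}$ be a left-linear TRS, $t$ a partial term in $\mathcal{R}$, and $U$ a set of pairwise non-conflicting redex occurrences in $t$. Then $U$ has a complete development in $t$.
   Context: Partial terms are terms over $\Sigma_\bot=\Sigma\uplus\{\bot\}$ ordered by $\le_\bot$ (replacing subterms by $\bot$), a complete semilattice; $\liminf_{\iota\to\alpha}a_\iota=\bigvee_{\beta<\alpha}\bigwedge_{\beta\le\iota<\alpha}a_\iota$. A reduction $(t_\iota\to_{\pi_\iota}t_{\iota+1})_{\iota<\alpha}$ with contexts $c_\iota$ ($t_\iota$ with position $\pi_\iota$ replaced by $\bot$) strongly $p$-converges to $t$ if $\liminf_{\iota\to\lambda}c_\iota=t_\lambda$ for limits $\lambda<\alpha$ and $t$ is the last term (closed) or $t=\liminf_{\iota\to\alpha}c_\iota$ (open). Two distinct redex occurrences $u,v$ are conflicting if $v=u\cdot\pi$ with $\pi$ a pattern (function-symbol) position of the redex at $u$, or vice versa. Descendants $U/S$ of non-$\bot$ positions: identity for the empty reduction; for a step at $\pi$ with $l\to r$, $u$ is kept if $\pi\not\le u$, deleted if it lies in the pattern, and copied to $\pi\cdot w'\cdot x$ for all $w'$ with $r|_{w'}=l|_w$ if $u=\pi\cdot w\cdot x$ with $l|_w$ a variable; composed at successors; at a limit $\alpha$, $u\in U/S$ iff $u$ is a non-$\bot$ position of the final term and $u\in U/(S|_\iota)$ for all $\iota$ from some $\beta<\alpha$ on. A development of $U$ is a strongly $p$-converging reduction whose $\iota$-th step contracts a redex at a position in $U/(S|_\iota)$; it is complete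 if $U/S=\emptyset$. *)

From Stdlib Require Import List Arith.
Import ListNotations.
Set Implicit Arguments.

Section Terms.
Variables (F V : Type) (arity : F -> nat).

Inductive sym : Type := SFun (f : F) | SVar (x : V) | SBot.

(* a (possibly infinite) partial term: the partial map position |-> symbol;
   positions are root-to-leaf lists of argument indices *)
Definition term := list nat -> option sym.

Definition wf (t : term) : Prop :=
  t [] <> None /\
  forall p i, t (p ++ [i]) <> None <-> exists f, t p = Some (SFun f) /\ i < arity f.

Definition total (t : term) : Prop := forall p, t p <> Some SBot.
Definition finite_term (t : term) : Prop :=
  exists n, forall p, t p <> None -> length p <= n.
Definition var_of (t : term) (x : V) : Prop := exists p, t p = Some (SVar x).
Definition linear (t : term) : Prop :=
  forall p q x, t p = Some (SVar x) -> t q = Some (SVar x) -> p = q.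

Record rule := Rule { lhs : term; rhs : term }.

Definition is_trs (R : rule -> Prop) : Prop :=
  forall rho, R rho ->
    wf (lhs rho) /\ wf (rhs rho) /\ total (lhs rho) /\ total (rhs rho) /\
    finite_term (lhs rho) /\ (exists f, lhs rho [] = Some (SFun f)) /\
    (forall x, var_of (rhs rho) x -> var_of (lhs rho) x).

Definition left_linear_trs (R : rule -> Prop) : Prop :=
  is_trs R /\ forall rho, R rho -> linear (lhs rho).

Definition subterm (t : term) (u : list nat) : term := fun p => t (u ++ p).

Definition is_prefix (u p : list nat) : Prop := exists w, p = u ++ w.

Definition replace (t : term) (u : list nat) (s : term) : term :=
  fun p => if list_eq_dec Nat.eq_dec (firstn (length u) p) u
           then s (skipn (length u) p) else t p.

Definition botterm : term := fun p => match p with [] => Some SBot | _ => None end.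

Fixpoint substf (sigma : V -> term) (l : term) (w p : list nat) : option sym :=
  match l w with
  | Some (SVar x) => sigma x p
  | _ => match p with
         | [] => l w
         | i :: p' => substf sigma l (w ++ [i]) p'
         end
  end.
Definition subst (sigma : V -> term) (l : term) : term := substf sigma l [].

Definition rstep (R : rule -> Prop) (s : term) (pi : list nat) (rho : rule) (s' : term) : Prop :=
  R rho /\ exists sigma : V -> term,
    subterm s pi = subst sigma (lhs rho) /\ s' = replace s pi (subst sigma (rhs rho)).

Definition redex_at (R : rule -> Prop) (t : term) (u : list nat) (rho : rule) : Prop :=
  R rho /\ exists sigma, subterm t u = subst sigma (lhs rho).
Definition redex_occ (R : rule -> Prop) (t : term) (u : list nat) : Prop :=
  exists rho, redex_at R t u rho.

Definition pattern_pos (rho : rule) (w : list nat) : Prop :=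
  exists f, lhs rho w = Some (SFun f).

Definition conflicting (R : rule -> Prop) (t : term) (u v : list nat) : Prop :=
  u <> v /\
  ((exists pi rho, v = u ++ pi /\ redex_at R t u rho /\ pattern_pos rho pi) \/
   (exists pi rho, u = v ++ pi /\ redex_at R t v rho /\ pattern_pos rho pi)).

Definition le_bot (s t : term) : Prop :=
  forall p x, s p = Some x -> x <> SBot -> t p = Some x.

Definition is_glb (P : term -> Prop) (g : term) : Prop :=
  wf g /\ (forall s, P s -> le_bot g s) /\
  (forall h, wf h -> (forall s, P s -> le_bot h s) -> le_bot h g).
Definition is_lub (P : term -> Prop) (g : term) : Prop :=
  wf g /\ (forall s, P s -> le_bot s g) /\
  (forall h, wf h -> (forall s, P s -> le_bot s h) -> le_bot g h).

Definition nonbot_pos (t : term) (u : list nat) : Prop :=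
  exists x, t u = Some x /\ x <> SBot.

Definition pset := list nat -> Prop.
Definition pseteq (A B : pset) : Prop := forall u, A u <-> B u.

Definition desc_step (rho : rule) (pi : list nat) (U : pset) : pset :=
  fun v => exists u, U u /\
    ((~ is_prefix pi u /\ v = u) \/
     (exists w x y w', u = pi ++ w ++ x /\ lhs rho w = Some (SVar y) /\
                       rhs rho w' = Some (SVar y) /\ v = pi ++ w' ++ x)).

(* transfinite reductions: the steps are indexed by a well-ordered type
   (the ordinals iota < alpha); [fin] is the term t_alpha. *)
Record reduction := Reduction {
  idx : Type;
  ilt : idx -> idx -> Prop;
  tm : idx -> term;
  pos : idx -> list nat;
  rl : idx -> rule;
  fin : term
}.

Definition well_order (A : Type) (lt : A -> A -> Prop) : Prop :=
  (forall a, ~ lt a a) /\ (forall a b c, lt a b -> lt b c -> lt a c) /\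
  (forall a b, lt a b \/ a = b \/ lt b a) /\ well_founded lt.

Section Red.
Variable S : reduction.
Let A := idx S.
Let lt := ilt S.

Definition succ_of (i j : A) : Prop := lt i j /\ forall k, lt i k -> j = k \/ lt j k.
Definition is_min (i : A) : Prop := forall k, ~ lt k i.
Definition is_max (i : A) : Prop := forall k, ~ lt i k.
Definition is_limit (l : A) : Prop := ~ is_min l /\ ~ exists i, succ_of i l.
Definition open_red : Prop := (exists a : A, True) /\ ~ exists m, is_max m.
Definition empty_red : Prop := forall a : A, False.

Definition ctx (i : A) : term := replace (tm S i) (pos S i) botterm.

(* liminf_{iota -> lambda} c_iota, where B is the index set {iota < lambda} *)
Definition is_liminf (B : A -> Prop) (t : term) : Prop :=
  exists g : A -> term,
    (forall b, B b -> is_glb (fun s => exists i, B i /\ (b = i \/ lt b i) /\ s = ctx i) (g b)) /\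
    is_lub (fun s => exists b, B b /\ s = g b) t.

Definition sp_converging (R : rule -> Prop) (s : term) : Prop :=
  well_order lt /\
  (forall i, wf (tm S i)) /\ wf (fin S) /\
  (forall i, is_min i -> tm S i = s) /\ (empty_red -> fin S = s) /\
  (forall i j, succ_of i j -> rstep R (tm S i) (pos S i) (rl S i) (tm S j)) /\
  (forall i, is_max i -> rstep R (tm S i) (pos S i) (rl S i) (fin S)) /\
  (forall l, is_limit l -> is_liminf (fun i => lt i l) (tm S l)) /\
  (open_red -> is_liminf (fun _ => True) (fin S)).

(* D i = U/(S|_i) and Dfin = U/S *)
Definition lim_desc (D : A -> pset) (B : A -> Prop) (t : term) : pset :=
  fun u => nonbot_pos t u /\
           exists b, B b /\ forall i, B i -> (b = i \/ lt b i) -> D i u.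

Definition is_descendants (U : pset) (D : A -> pset) (Dfin : pset) : Prop :=
  (forall i, is_min i -> pseteq (D i) U) /\ (empty_red -> pseteq Dfin U) /\
  (forall i j, succ_of i j -> pseteq (D j) (desc_step (rl S i) (pos S i) (D i))) /\
  (forall i, is_max i -> pseteq Dfin (desc_step (rl S i) (pos S i) (D i))) /\
  (forall l, is_limit l -> pseteq (D l) (lim_desc D (fun i => lt i l) (tm S l))) /\
  (open_red -> pseteq Dfin (lim_desc D (fun _ => True) (fin S))).

Definition complete_development (R : rule -> Prop) (t : term) (U : pset) : Prop :=
  sp_converging R t /\
  exists (D : A -> pset) (Dfin : pset),
    is_descendants U D Dfin /\
    (forall i, D i (pos S i)) /\
    (forall u, ~ Dfin u).
End Red.
End Terms.

(* Contract the residuals one at a time.  Left-linearity and the absence of conflicts give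
   the invariant [independent_redexes]: every residual is a redex of a rule whose pattern
   contains no other residual, so contracting one residual leaves the others redexes
   (possibly copied, never destroyed by overlap) and the invariant is preserved.  The
   residual to contract is chosen by an enumeration proposing every position infinitely
   often.  If the residuals run out after finitely many steps we have a finite complete
   development; otherwise the omega-long reduction strongly p-converges to the liminf of its
   contexts, and by fairness no residual survives there. *)

From Stdlib Require Import List Arith Lia Cantor Wellfounded.
From Stdlib Require Import Classical ClassicalEpsilon FunctionalExtensionality.
Import ListNotations.

Local Arguments SFun {F V} f.
Local Arguments SVar {F V} x.
Local Arguments SBot {F V}.
Local Arguments botterm {F V}.

Section Terms.
Context {F V : Type} {arity : F -> nat}.
Notation term := (term F V).
Notation wf := (wf arity).

Lemma firstn_length_app (u w : list nat) : firstn (length u) (u ++ w) = u.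
Proof. rewrite firstn_app, Nat.sub_diag, firstn_all. apply app_nil_r. Qed.

Lemma replace_at (t s : term) u w : replace t u s (u ++ w) = s w.
Proof.
  unfold replace. rewrite firstn_length_app.
  destruct (list_eq_dec Nat.eq_dec u u); [|congruence].
  rewrite skipn_app, Nat.sub_diag, skipn_all. reflexivity.
Qed.

Lemma replace_away (t s : term) u p : ~ is_prefix u p -> replace t u s p = t p.
Proof.
  intro H. unfold replace. destruct (list_eq_dec Nat.eq_dec _ u) as [e|]; [|reflexivity].
  exfalso. apply H. exists (skipn (length u) p). rewrite <- e at 1. symmetry. apply firstn_skipn.
Qed.

Lemma replace_app (t s : term) u q p :
  replace t (u ++ q) s (u ++ p) = replace (subterm t u) q s p.
Proof.
  destruct (classic (is_prefix q p)) as [[w ->]|Hn].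
  - rewrite app_assoc, !replace_at. reflexivity.
  - rewrite !replace_away; auto. intros [w Hw]. apply Hn. exists w.
    rewrite <- app_assoc in Hw. apply app_inv_head in Hw. auto.
Qed.

Lemma is_prefix_snoc (pi p : list nat) i :
  is_prefix pi (p ++ [i]) -> pi = p ++ [i] \/ is_prefix pi p.
Proof.
  intros [w Hw]. destruct w as [|a w] using rev_ind.
  - left. rewrite app_nil_r in Hw. auto.
  - right. exists w. rewrite app_assoc in Hw. apply app_inj_tail in Hw. destruct Hw; auto.
Qed.

Lemma is_prefix_app_eq (u a pi b : list nat) :
  u ++ a = pi ++ b -> is_prefix pi u \/ is_prefix u pi.
Proof.
  intro H. apply app_eq_app in H as [l [[H _]|[H _]]]; [left|right]; exists l; auto.
Qed.

Lemma wf_prefix_defined (t : term) : wf t -> forall q p, t (p ++ q) <> None -> t p <> None.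
Proof.
  intros [_ Hw] q. induction q as [|a q IH] using rev_ind; intros p H.
  - rewrite app_nil_r in H. auto.
  - apply IH. rewrite app_assoc in H. apply Hw in H as [f [Hf _]]. congruence.
Qed.

Lemma wf_parent_fun (t : term) p a q : wf t -> t (p ++ a :: q) <> None ->
  exists f, t p = Some (SFun f) /\ a < arity f.
Proof.
  intros Hw H. apply (proj2 Hw). apply (wf_prefix_defined _ Hw q).
  rewrite <- app_assoc. auto.
Qed.

Lemma wf_var_leaf (t : term) x w q :
  wf t -> t w = Some (SVar x) -> t (w ++ q) <> None -> q = [].
Proof.
  intros Hw H1 H2. destruct q as [|a q]; auto.
  apply wf_parent_fun in H2 as [f [Hf _]]; auto. congruence.
Qed.

Lemma wf_var_not_fun (t : term) x w q f :
  wf t -> t w = Some (SVar x) -> t (w ++ q) <> Some (SFun f).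
Proof.
  intros Hw H1 H2. assert (q = []) as -> by (apply (wf_var_leaf _ _ _ _ Hw H1); congruence).
  rewrite app_nil_r in H2. congruence.
Qed.

Lemma subterm_wf (t : term) u : wf t -> t u <> None -> wf (subterm t u).
Proof.
  intros [H0 Hw] Hu. split.
  - unfold subterm. rewrite app_nil_r. auto.
  - intros p i. unfold subterm. rewrite app_assoc. apply Hw.
Qed.

Lemma botterm_wf : wf (@botterm F V).
Proof.
  split; [discriminate|]. intros p i. split.
  - intro H. exfalso. apply H. destruct p; reflexivity.
  - intros [f [Hf _]]. destruct p; discriminate.
Qed.

Lemma replace_wf (t s : term) pi : wf t -> t pi <> None -> wf s -> wf (replace t pi s).
Proof.
  intros Ht Hpi Hs. split.
  - destruct pi as [|a pi].
    + pose proof (replace_at t s [] []) as E. simpl in E. rewrite E. apply Hs.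
    + rewrite replace_away; [apply Ht|]. intros [w Hw]. discriminate.
  - intros p i. destruct (classic (is_prefix pi p)) as [[w ->]|Hn].
    + rewrite <- app_assoc, !replace_at. apply Hs.
    + rewrite (replace_away _ _ _ _ Hn).
      destruct (classic (is_prefix pi (p ++ [i]))) as [Hp|Hp].
      * destruct (is_prefix_snoc _ _ _ Hp) as [->|]; [|contradiction].
        pose proof (replace_at t s (p ++ [i]) []) as E. rewrite app_nil_r in E. rewrite E.
        split; intros _; [apply (proj2 Ht); auto|apply Hs].
      * rewrite replace_away by exact Hp. apply Ht.
Qed.

Definition notvar (o : option (sym F V)) : Prop := forall x, o <> Some (SVar x).

Lemma substf_var sigma (l : term) w p x :
  l w = Some (SVar x) -> substf sigma l w p = sigma x p.
Proof. intro H. destruct p; simpl; rewrite H; reflexivity. Qed.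

Lemma substf_notvar sigma (l : term) w p : notvar (l w) ->
  substf sigma l w p = match p with [] => l w | i :: p' => substf sigma l (w ++ [i]) p' end.
Proof.
  intro H. destruct p; simpl; destruct (l w) as [[f|x|]|]; try reflexivity;
    exfalso; apply (H x); reflexivity.
Qed.

Lemma substf_cases (l : term) : forall p w,
  (exists w1 q1 x, p = w1 ++ q1 /\ l (w ++ w1) = Some (SVar x) /\
      forall sigma, substf sigma l w p = sigma x q1) \/
  ((forall w1 q1, p = w1 ++ q1 -> notvar (l (w ++ w1))) /\
      forall sigma, substf sigma l w p = l (w ++ p)).
Proof.
  induction p as [|a p IH]; intro w;
    (destruct (classic (notvar (l w))) as [Hnv|Hv];
     [|apply not_all_not_ex in Hv as [x Hx]; left; eexists [], _, x;
       split; [reflexivity|]; rewrite app_nil_r;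
       split; [exact Hx|intro; apply substf_var; exact Hx]]).
  - right. split.
    + intros w1 q1 E. symmetry in E. apply app_eq_nil in E as [-> ->].
      rewrite app_nil_r. exact Hnv.
    + intro sigma. rewrite substf_notvar, app_nil_r by exact Hnv. reflexivity.
  - destruct (IH (w ++ [a])) as [[w1 [q1 [x [-> [Hx Hs]]]]]|[Hnv' Hs]].
    + left. exists (a :: w1), q1, x. rewrite <- app_assoc in Hx.
      split; [reflexivity|split; [exact Hx|]].
      intro sigma. rewrite substf_notvar by exact Hnv. apply Hs.
    + right. split.
      * intros [|b w1] q1 E; [rewrite app_nil_r; exact Hnv|].
        injection E as <- E. specialize (Hnv' _ _ E). rewrite <- app_assoc in Hnv'. exact Hnv'.
      * intro sigma. rewrite substf_notvar, Hs, <- app_assoc by exact Hnv. reflexivity.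
Qed.

Lemma subst_cases (l : term) p :
  (exists w1 q1 x, p = w1 ++ q1 /\ l w1 = Some (SVar x) /\
      forall sigma, subst sigma l p = sigma x q1) \/
  ((forall w1 q1, p = w1 ++ q1 -> notvar (l w1)) /\
      forall sigma, subst sigma l p = l p).
Proof. apply (substf_cases l p []). Qed.

Lemma subst_var (l : term) sigma w x q :
  wf l -> l w = Some (SVar x) -> subst sigma l (w ++ q) = sigma x q.
Proof.
  intros Hw Hx. destruct (subst_cases l (w ++ q)) as [[w1 [q1 [y [E [Hy ->]]]]]|[Hnv _]].
  - apply app_eq_app in E as [m [[-> ->]|[-> ->]]].
    + assert (m = []) as -> by (apply (wf_var_leaf _ _ _ _ Hw Hy); congruence).
      rewrite app_nil_r in Hx. rewrite Hx in Hy. injection Hy as ->. reflexivity.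
    + assert (m = []) as -> by (apply (wf_var_leaf _ _ _ _ Hw Hx); congruence).
      rewrite app_nil_r, Hx in Hy. injection Hy as ->. reflexivity.
  - exfalso. exact (Hnv w q eq_refl x Hx).
Qed.

Lemma subst_fun (l : term) sigma p f :
  wf l -> l p = Some (SFun f) -> subst sigma l p = Some (SFun f).
Proof.
  intros Hw Hf. destruct (subst_cases l p) as [[w1 [q1 [y [-> [Hy _]]]]]|[_ ->]]; auto.
  exfalso. exact (wf_var_not_fun _ _ _ q1 f Hw Hy Hf).
Qed.

Lemma subst_wf (r : term) sigma :
  wf r -> (forall y, var_of r y -> wf (sigma y)) -> wf (subst sigma r).
Proof.
  intros Hr Hs. split.
  - destruct (subst_cases r []) as [[w1 [q1 [y [E [Hy ->]]]]]|[_ ->]]; [|apply Hr].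
    symmetry in E. apply app_eq_nil in E as [-> ->]. apply Hs. exists []. auto.
  - intros p i. destruct (subst_cases r p) as [[w1 [q1 [y [-> [Hy _]]]]]|[Hnv ->]].
    + rewrite <- app_assoc, !subst_var with (x := y) by auto.
      apply Hs. exists w1. auto.
    + destruct (subst_cases r (p ++ [i])) as [[w1 [q1 [y [E [Hy Hsub]]]]]|[_ ->]];
        [|apply Hr].
      destruct q1 as [|b q1] using rev_ind.
      * rewrite app_nil_r in E. subst w1. rewrite Hsub.
        split; intros _; [apply (proj2 Hr); congruence|apply Hs; eexists; eauto].
      * rewrite app_assoc in E. apply app_inj_tail in E as [E _].
        exfalso. exact (Hnv w1 q1 E y Hy).
Qed.

End Terms.

Section Steps.
Context {F V : Type} {arity : F -> nat} {R : rule F V -> Prop}.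
Hypothesis HR : left_linear_trs arity R.
Notation term := (term F V).
Notation wf := (wf arity).

Lemma lhs_wf rho : R rho -> wf (lhs rho).
Proof. intro H. apply (proj1 HR rho H). Qed.

Lemma rhs_wf rho : R rho -> wf (rhs rho).
Proof. intro H. apply (proj1 HR rho H). Qed.

Lemma lhs_total rho : R rho -> total (lhs rho).
Proof. intro H. apply (proj1 HR rho H). Qed.

Lemma lhs_root_fun rho : R rho -> exists f, lhs rho [] = Some (SFun f).
Proof. intro H. apply (proj1 HR rho H). Qed.

Lemma rhs_var_lhs rho y : R rho -> var_of (rhs rho) y -> var_of (lhs rho) y.
Proof. intro H. apply (proj1 HR rho H). Qed.

Lemma lhs_linear rho : R rho -> linear (lhs rho).
Proof. intro H. exact (proj2 HR rho H). Qed.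

Lemma redex_defined (t : term) u rho sigma :
  R rho -> subterm t u = subst sigma (lhs rho) -> t u <> None.
Proof.
  intros H Hs. destruct (lhs_root_fun _ H) as [f Hf].
  rewrite <- (app_nil_r u). change (t (u ++ [])) with (subterm t u []).
  rewrite Hs, (subst_fun _ _ _ _ (lhs_wf _ H) Hf). discriminate.
Qed.

Lemma subst_var_subterm (t : term) u (l : term) sigma w y : wf l ->
  subterm t u = subst sigma l -> l w = Some (SVar y) -> sigma y = subterm t (u ++ w).
Proof.
  intros Hl Hs Hw. extensionality q. unfold subterm.
  rewrite <- app_assoc. change (t (u ++ w ++ q)) with (subterm t u (w ++ q)).
  rewrite Hs. symmetry. exact (subst_var _ _ _ _ _ Hl Hw).
Qed.

Lemma rstep_wf (t : term) pi rho sigma : wf t -> R rho ->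
  subterm t pi = subst sigma (lhs rho) -> wf (replace t pi (subst sigma (rhs rho))).
Proof.
  intros Ht H Hs. pose proof (lhs_wf _ H) as Hl.
  apply replace_wf; [exact Ht|exact (redex_defined _ _ _ _ H Hs)|].
  apply subst_wf; [exact (rhs_wf _ H)|]. intros y Hy.
  apply rhs_var_lhs in Hy as [w Hw]; [|exact H].
  rewrite (subst_var_subterm _ _ _ _ _ _ Hl Hs Hw). apply subterm_wf; [exact Ht|].
  destruct w as [|k w] using rev_ind; [destruct (lhs_root_fun _ H); congruence|].
  destruct (proj2 Hl w k) as [Hpar _]. destruct Hpar as [g [Hg Hk]]; [congruence|].
  assert (Eg : subterm t pi w = Some (SFun g)) by (rewrite Hs; exact (subst_fun _ _ _ _ Hl Hg)).
  unfold subterm in Eg. rewrite app_assoc. apply (proj2 Ht). eauto.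
Qed.

End Steps.

Definition independent_redexes {F V : Type} (R : rule F V -> Prop) (t : term F V) (D : pset)
  : Prop :=
  forall u, D u -> exists rho, redex_at R t u rho /\
    forall q, q <> [] -> D (u ++ q) -> ~ pattern_pos rho q.

(* [desc_step rho pi D] unfolds to [fun v => exists u, D u /\ residual_of rho pi u v]. *)
Definition residual_of {F V : Type} (rho : rule F V) (pi u v : list nat) : Prop :=
  (~ is_prefix pi u /\ v = u) \/
  (exists w x y w', u = pi ++ w ++ x /\ lhs rho w = Some (SVar y) /\
                    rhs rho w' = Some (SVar y) /\ v = pi ++ w' ++ x).

Section Residuals.
Context {F V : Type} {arity : F -> nat} {R : rule F V -> Prop}.
Hypothesis HR : left_linear_trs arity R.
Notation term := (term F V).
Notation wf := (wf arity).

Lemma below_redex_through_var (t : term) u rho sigma q :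
  R rho -> subterm t u = subst sigma (lhs rho) -> t (u ++ q) <> None ->
  ~ pattern_pos rho q -> exists wq rq y, q = wq ++ rq /\ lhs rho wq = Some (SVar y).
Proof.
  intros H Hs Hq Hp.
  destruct (subst_cases (lhs rho) q) as [[w1 [q1 [y [E [Hy _]]]]]|[_ Hsub]]; [eauto|].
  change (t (u ++ q)) with (subterm t u q) in Hq. rewrite Hs, Hsub in Hq.
  destruct (lhs rho q) as [[g|y|]|] eqn:Eq.
  - exfalso. apply Hp. exists g. exact Eq.
  - exists q, [], y. rewrite app_nil_r. auto.
  - exfalso. exact (lhs_total HR _ H q Eq).
  - congruence.
Qed.

(* Only the binding of [y] changes; linearity makes [wq] the unique occurrence of [y]. *)
Lemma subterm_replace_below_var (t s : term) u (l : term) sigma wq rq y : wf l -> linear l ->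
  subterm t u = subst sigma l -> l wq = Some (SVar y) ->
  exists sigma', subterm (replace t (u ++ wq ++ rq) s) u = subst sigma' l.
Proof.
  intros Hl Hlin Hs Hy.
  exists (fun z => if excluded_middle_informative (z = y) then replace (sigma y) rq s else sigma z).
  extensionality p. unfold subterm at 1. rewrite replace_app, Hs.
  destruct (subst_cases l p) as [[w1 [q1 [x [-> [Hx Hsub]]]]]|[Hnv Hsub]].
  - rewrite Hsub. destruct (excluded_middle_informative (x = y)) as [->|Hxy].
    + assert (w1 = wq) as -> by exact (Hlin w1 wq y Hx Hy).
      rewrite replace_app. f_equal. extensionality m. exact (subst_var _ _ _ _ _ Hl Hy).
    + rewrite replace_away by
        (intros [m Hm]; rewrite <- app_assoc in Hm; apply app_eq_app in Hm as [k [[-> _]|[-> _]]];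
         [assert (k = []) as -> by (apply (wf_var_leaf _ _ _ _ Hl Hy); congruence)
         |assert (k = []) as -> by (apply (wf_var_leaf _ _ _ _ Hl Hx); congruence)];
         rewrite app_nil_r in *; congruence).
      exact (subst_var _ _ _ _ _ Hl Hx).
  - rewrite Hsub, replace_away; [apply Hsub|].
    intros [m ->]. exact (Hnv wq (rq ++ m) (eq_sym (app_assoc _ _ _)) y Hy).
Qed.

Lemma subterm_replace_disjoint (t s : term) pi u :
  ~ is_prefix pi u -> ~ is_prefix u pi -> subterm (replace t pi s) u = subterm t u.
Proof.
  intros H1 H2. extensionality p. unfold subterm. apply replace_away.
  intros [w Hw]. destruct (is_prefix_app_eq u p pi w Hw); auto.
Qed.

Lemma subterm_rstep_copy (t : term) pi (l r : term) sigma w x w' y : wf l -> wf r ->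
  subterm t pi = subst sigma l -> l w = Some (SVar y) -> r w' = Some (SVar y) ->
  subterm (replace t pi (subst sigma r)) (pi ++ w' ++ x) = subterm t (pi ++ w ++ x).
Proof.
  intros Hl Hr Hs Hw Hw'. extensionality p. unfold subterm.
  rewrite <- !app_assoc, replace_at, (subst_var _ _ _ _ _ Hr Hw').
  change (t (pi ++ w ++ x ++ p)) with (subterm t pi (w ++ x ++ p)). rewrite Hs.
  symmetry. exact (subst_var _ _ _ _ _ Hl Hw).
Qed.

Lemma residual_redex (t : term) (D : pset) pi rho sigma u rho_u v :
  R rho -> subterm t pi = subst sigma (lhs rho) -> D pi ->
  redex_at R t u rho_u -> (forall q, q <> [] -> D (u ++ q) -> ~ pattern_pos rho_u q) ->
  residual_of rho pi u v -> redex_at R (replace t pi (subst sigma (rhs rho))) v rho_u.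
Proof.
  intros H Hs Dpi [Hu [su Hsu]] Hfree [[Hnp ->]|[w [x [y [w' [-> [Hw [Hw' ->]]]]]]]];
    split; try exact Hu.
  - destruct (classic (is_prefix u pi)) as [[q ->]|Hnp'].
    + assert (Hq : q <> []) by (intros ->; apply Hnp; exists []; rewrite !app_nil_r; reflexivity).
      destruct (below_redex_through_var _ _ _ _ _ Hu Hsu (redex_defined HR _ _ _ _ H Hs)
                  (Hfree q Hq Dpi)) as [wq [rq [yq [-> Hyq]]]].
      exact (subterm_replace_below_var _ _ _ _ _ _ _ _
               (lhs_wf HR _ Hu) (lhs_linear HR _ Hu) Hsu Hyq).
    + exists su. rewrite subterm_replace_disjoint by assumption. exact Hsu.
  - exists su.
    rewrite (subterm_rstep_copy _ _ _ _ _ _ _ _ _ (lhs_wf HR _ H) (rhs_wf HR _ H) Hs Hw Hw').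
    exact Hsu.
Qed.

Lemma residual_pattern_free (t : term) (D : pset) pi rho sigma u rho_u v u' q :
  R rho -> subterm t pi = subst sigma (lhs rho) -> D pi -> D u' ->
  redex_at R t u rho_u -> (forall q, q <> [] -> D (u ++ q) -> ~ pattern_pos rho_u q) ->
  residual_of rho pi u v -> residual_of rho pi u' (v ++ q) -> q <> [] ->
  ~ pattern_pos rho_u q.
Proof.
  intros H Hs Dpi Du' [Hu [su Hsu]] Hfree Hv Hv' Hq [g Hpat].
  destruct Hv as [[Hnp ->]|[w [x [y [w' [-> [Hw [Hw' ->]]]]]]]];
    destruct Hv' as [[Hnp' E]|[w2 [x2 [y2 [w2' [-> [Hw2 [Hw2' E]]]]]]]].
  - subst u'. exact (Hfree q Hq Du' (ex_intro _ g Hpat)).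
  - destruct (is_prefix_app_eq _ _ _ _ E) as [|[m ->]]; [contradiction|].
    assert (Hm : m <> []) by (intros ->; apply Hnp; exists []; rewrite !app_nil_r; reflexivity).
    destruct (below_redex_through_var _ _ _ _ _ Hu Hsu (redex_defined HR _ _ _ _ H Hs)
                (Hfree m Hm Dpi)) as [wq [rq [yq [-> Hyq]]]].
    rewrite <- !app_assoc in E. apply app_inv_head in E as ->.
    exact (wf_var_not_fun _ _ _ _ _ (lhs_wf HR _ Hu) Hyq Hpat).
  - apply Hnp'. exists (w' ++ x ++ q). rewrite <- E, <- !app_assoc. reflexivity.
  - rewrite <- !app_assoc in E. apply app_inv_head in E.
    assert (Hr : wf (rhs rho)) by exact (rhs_wf HR _ H).
    assert (w2' = w' /\ y2 = y) as [-> ->].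
    { symmetry in E. apply app_eq_app in E as [k [[-> _]|[-> _]]].
      - assert (k = []) as -> by (apply (wf_var_leaf _ _ _ _ Hr Hw'); congruence).
        rewrite app_nil_r in *. split; congruence.
      - assert (k = []) as -> by (apply (wf_var_leaf _ _ _ _ Hr Hw2'); congruence).
        rewrite app_nil_r in *. split; congruence. }
    apply app_inv_head in E as <-.
    assert (w2 = w) as -> by exact (lhs_linear HR _ H w2 w y Hw2 Hw).
    apply (Hfree q Hq); [|exists g; exact Hpat]. rewrite <- !app_assoc. exact Du'.
Qed.

Lemma independent_redexes_rstep (t : term) D pi rho sigma :
  independent_redexes R t D -> D pi -> R rho -> subterm t pi = subst sigma (lhs rho) ->
  independent_redexes R (replace t pi (subst sigma (rhs rho))) (desc_step rho pi D).
Proof.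
  intros HI Dpi H Hs v [u [Du Hv]]. destruct (HI u Du) as [rho_u [Hru Hfree]].
  exists rho_u. split.
  - exact (residual_redex _ _ _ _ _ _ _ _ H Hs Dpi Hru Hfree Hv).
  - intros q Hq [u' [Du' Hv']].
    exact (residual_pattern_free _ _ _ _ _ _ _ _ _ _ H Hs Dpi Du' Hru Hfree Hv Hv' Hq).
Qed.

End Residuals.

Section Liminf.
Context {F V : Type} {arity : F -> nat}.
Notation term := (term F V).
Notation wf := (wf arity).

Definition truncate (St : list nat -> Prop) (val : term) : term := fun p =>
  if excluded_middle_informative (St p) then val p
  else if excluded_middle_informative
            (exists p0 k f, p = p0 ++ [k] /\ St p0 /\ val p0 = Some (SFun f) /\ k < arity f)
  then Some SBot
  else match p with [] => Some SBot | _ => None end.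

Lemma truncate_in St val p : St p -> truncate St val p = val p.
Proof. intro H. unfold truncate. destruct (excluded_middle_informative (St p)); tauto. Qed.

Lemma truncate_nonbot St val p x :
  truncate St val p = Some x -> x <> SBot -> St p /\ val p = Some x.
Proof.
  unfold truncate. destruct (excluded_middle_informative (St p)); auto.
  destruct (excluded_middle_informative _); [congruence|]. destruct p; congruence.
Qed.

Lemma truncate_wf St val :
  (forall p q, St (p ++ q) -> St p) -> (forall p, St p -> val p <> None) ->
  (forall p i, St (p ++ [i]) -> val (p ++ [i]) <> None ->
     exists f, val p = Some (SFun f) /\ i < arity f) ->
  wf (truncate St val).
Proof.
  intros Hclosed Hdef Hpar. split.
  - unfold truncate. destruct (excluded_middle_informative (St [])); auto.
    destruct (excluded_middle_informative _); discriminate.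
  - intros p i. split.
    + unfold truncate at 1. destruct (excluded_middle_informative (St (p ++ [i]))) as [Hs|Hs].
      * intro Hn. destruct (Hpar p i Hs Hn) as [f [Hf Hi]]. exists f.
        rewrite truncate_in by exact (Hclosed _ _ Hs). auto.
      * destruct (excluded_middle_informative _) as [[p0 [k [f [E [Hp0 [Hf Hk]]]]]]|Hn].
        -- intros _. apply app_inj_tail in E as [-> ->]. exists f. rewrite truncate_in; auto.
        -- destruct p; intro; contradiction.
    + intros [f [Hf Hi]]. destruct (truncate_nonbot _ _ _ _ Hf ltac:(discriminate)) as [Hp Hv].
      unfold truncate. destruct (excluded_middle_informative (St (p ++ [i]))) as [Hs|Hs]; auto.
      destruct (excluded_middle_informative _) as [_|Hn]; [discriminate|].
      exfalso. apply Hn. exists p, i, f. auto.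
Qed.

Variable c : nat -> term.
Hypothesis Hc : forall i, wf (c i).

Definition stable (b : nat) (p : list nat) : Prop :=
  (forall q r i, p = q ++ r -> b <= i -> c i q = c b q) /\ c b p <> None.

Lemma stable_prefix b p q : stable b (p ++ q) -> stable b p.
Proof.
  intros [H1 H2]. split.
  - intros q0 r i -> Hi. apply (H1 q0 (r ++ q) i); [symmetry; apply app_assoc|exact Hi].
  - exact (wf_prefix_defined _ (Hc b) q p H2).
Qed.

Lemma stable_val b p i : stable b p -> b <= i -> c i p = c b p.
Proof. intros [H1 _] Hi. apply (H1 p [] i); [symmetry; apply app_nil_r|exact Hi]. Qed.

Definition glb_from (b : nat) : term := truncate (stable b) (c b).

Lemma glb_from_wf b : wf (glb_from b).
Proof.
  apply truncate_wf.
  - apply stable_prefix.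
  - intros p [_ H]. exact H.
  - intros p i _ Hn. apply (Hc b). exact Hn.
Qed.

Definition eventually_stable (p : list nat) : Prop := exists b, stable b p.

Definition limit_val : term := fun p =>
  match excluded_middle_informative (eventually_stable p) with
  | left H => c (proj1_sig (constructive_indefinite_description _ H)) p
  | right _ => None
  end.

Lemma limit_val_eq b p : stable b p -> limit_val p = c b p.
Proof.
  intro Hb. unfold limit_val.
  destruct (excluded_middle_informative (eventually_stable p)) as [H|H];
    [|exfalso; apply H; exists b; exact Hb].
  destruct (constructive_indefinite_description _ H) as [b0 Hb0]. simpl.
  rewrite <- (stable_val b0 p (max b b0)) by (auto; lia).
  apply stable_val; [exact Hb|lia].
Qed.

Definition liminf_term : term := truncate eventually_stable limit_val.

Lemma liminf_term_wf : wf liminf_term.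
Proof.
  apply truncate_wf.
  - intros p q [b Hb]. exists b. exact (stable_prefix b p q Hb).
  - intros p [b Hb]. rewrite (limit_val_eq b) by exact Hb. apply Hb.
  - intros p i [b Hb] Hn. rewrite (limit_val_eq b) in Hn by exact Hb.
    rewrite (limit_val_eq b p) by exact (stable_prefix b p [i] Hb). apply (Hc b). exact Hn.
Qed.

Lemma glb_from_is_glb b :
  is_glb arity (fun s => exists i, True /\ (b = i \/ b < i) /\ s = c i) (glb_from b).
Proof.
  split; [apply glb_from_wf|split].
  - intros s [i [_ [Hi ->]]] p x Hp Hx. destruct (truncate_nonbot _ _ _ _ Hp Hx) as [Hs Hv].
    rewrite (stable_val b p i) by (auto; lia). exact Hv.
  - intros h Hh Hlow p x Hp Hx.
    assert (Hlow_i : forall i, b <= i -> le_bot h (c i))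
      by (intros i Hi; apply Hlow; exists i; repeat split; lia).
    assert (Hcb : c b p = Some x) by exact (Hlow_i b (le_n b) p x Hp Hx).
    unfold glb_from. rewrite truncate_in; [exact Hcb|]. split; [|congruence].
    intros q [|a r] i -> Hi.
    + rewrite app_nil_r in Hp, Hcb. rewrite Hcb. exact (Hlow_i i Hi _ _ Hp Hx).
    + destruct (wf_parent_fun _ q a r Hh ltac:(congruence)) as [f [Hf _]].
      rewrite (Hlow_i i Hi _ _ Hf), (Hlow_i b (le_n b) _ _ Hf); congruence.
Qed.

Lemma liminf_term_is_lub : is_lub arity (fun s => exists b, True /\ s = glb_from b) liminf_term.
Proof.
  split; [apply liminf_term_wf|split].
  - intros s [b [_ ->]] p x Hp Hx. destruct (truncate_nonbot _ _ _ _ Hp Hx) as [Hs Hv].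
    unfold liminf_term. rewrite truncate_in by (exists b; exact Hs).
    rewrite (limit_val_eq b) by exact Hs. exact Hv.
  - intros h Hh Hup p x Hp Hx. destruct (truncate_nonbot _ _ _ _ Hp Hx) as [[b Hs] Hv].
    rewrite (limit_val_eq b) in Hv by exact Hs.
    apply (Hup (glb_from b)); [exists b; auto| |exact Hx].
    unfold glb_from. rewrite truncate_in by exact Hs. exact Hv.
Qed.

Lemma liminf_term_nonbot p x :
  liminf_term p = Some x -> x <> SBot -> exists b, stable b p /\ c b p = Some x.
Proof.
  intros Hp Hx. destruct (truncate_nonbot _ _ _ _ Hp Hx) as [[b Hs] Hv]. exists b.
  rewrite (limit_val_eq b) in Hv by exact Hs. auto.
Qed.

End Liminf.

Fixpoint encode_pos (l : list nat) : nat :=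
  match l with [] => 0 | a :: l => S (Cantor.to_nat (a, encode_pos l)) end.

Fixpoint decode_pos (fuel n : nat) : list nat :=
  match fuel, n with
  | S fuel, S n => let p := Cantor.of_nat n in fst p :: decode_pos fuel (snd p)
  | _, _ => []
  end.

Lemma decode_encode_pos l fuel : encode_pos l <= fuel -> decode_pos fuel (encode_pos l) = l.
Proof.
  revert fuel. induction l as [|a l IH]; intros [|fuel] Hf; try reflexivity; [simpl in Hf; lia|].
  cbn [encode_pos decode_pos]. rewrite Cantor.cancel_of_to. simpl. f_equal. apply IH.
  simpl in Hf. pose proof (Cantor.to_nat_non_decreasing a (encode_pos l)). lia.
Qed.

Definition enum_pos (m : nat) : list nat := let k := fst (Cantor.of_nat m) in decode_pos k k.

Lemma enum_pos_infinitely_often u N : exists m, N <= m /\ enum_pos m = u.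
Proof.
  exists (Cantor.to_nat (encode_pos u, N)).
  pose proof (Cantor.to_nat_non_decreasing (encode_pos u) N). split; [lia|].
  unfold enum_pos. rewrite Cantor.cancel_of_to. apply decode_encode_pos, le_n.
Qed.

Section Sequences.
Context {F V : Type} {arity : F -> nat} {R : rule F V -> Prop}.
Hypothesis HR : left_linear_trs arity R.
Notation term := (term F V).
Notation wf := (wf arity).
Variables (ts : nat -> term) (ps : nat -> list nat) (rs : nat -> rule F V) (Ds : nat -> pset).
Hypothesis Ds_succ : forall m, Ds (S m) = desc_step (rs m) (ps m) (Ds m).

Section Prefix.
Variable N : nat.

Definition prefix_reduction : reduction F V :=
  {| idx := {i : nat | i < N}; ilt := fun a b => proj1_sig a < proj1_sig b;
     tm := fun a => ts (proj1_sig a); pos := fun a => ps (proj1_sig a);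
     rl := fun a => rs (proj1_sig a); fin := ts N |}.

Definition ord_at (i : nat) (H : i < N) : {i : nat | i < N} := exist _ i H.

Lemma ord_eq (a b : {i : nat | i < N}) : proj1_sig a = proj1_sig b -> a = b.
Proof. destruct a as [a Ha], b as [b Hb]. cbn. intros ->. f_equal. apply le_unique. Qed.

Lemma prefix_well_order : well_order (ilt prefix_reduction).
Proof.
  split; [|split; [|split]]; cbn.
  - intro a. lia.
  - intros a b c. lia.
  - intros a b. destruct (lt_eq_lt_dec (proj1_sig a) (proj1_sig b)) as [[H|H]|H];
      [left|right; left; apply ord_eq|right; right]; auto.
  - exact (wf_inverse_image _ _ lt (@proj1_sig _ _) lt_wf).
Qed.

Lemma prefix_min a : is_min prefix_reduction a -> proj1_sig a = 0.
Proof.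
  destruct a as [[|a] Ha]; intro H; [reflexivity|].
  exfalso. apply (H (ord_at 0 ltac:(lia))). cbn. lia.
Qed.

Lemma prefix_succ a b : succ_of prefix_reduction a b -> proj1_sig b = S (proj1_sig a).
Proof.
  destruct a as [a Ha], b as [b Hb]. intros [Hab Hk]. cbn in *.
  destruct (Hk (ord_at (S a) ltac:(lia)) ltac:(cbn; lia)) as [E|E].
  - exact (f_equal (@proj1_sig _ _) E).
  - cbn in E. lia.
Qed.

Lemma prefix_max a : is_max prefix_reduction a -> S (proj1_sig a) = N.
Proof.
  destruct a as [a Ha]. intro H. cbn. destruct (Nat.eq_dec (S a) N) as [|Hn]; [assumption|].
  exfalso. apply (H (ord_at (S a) ltac:(lia))). cbn. lia.
Qed.

Lemma prefix_no_limit l : ~ is_limit prefix_reduction l.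
Proof.
  destruct l as [[|l] Hl]; intros [Hnm Hns].
  - apply Hnm. intros [k Hk]. cbn. lia.
  - apply Hns. exists (ord_at l ltac:(lia)). split; [cbn; lia|].
    intros [k Hk] Hlk. cbn in *. destruct (Nat.eq_dec k (S l)) as [->|Hn].
    + left. apply ord_eq. reflexivity.
    + right. cbn. lia.
Qed.

Lemma prefix_not_open : ~ open_red prefix_reduction.
Proof.
  intros [[[a Ha] _] Hnomax]. apply Hnomax. exists (ord_at (N - 1) ltac:(lia)).
  intros [k Hk]. cbn. lia.
Qed.

Lemma prefix_empty : empty_red prefix_reduction -> N = 0.
Proof.
  intro He. destruct (Nat.eq_dec N 0) as [|Hn]; [assumption|].
  destruct (He (ord_at 0 ltac:(lia))).
Qed.

Lemma prefix_sp_converging :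
  (forall m, m <= N -> wf (ts m)) ->
  (forall m, m < N -> rstep R (ts m) (ps m) (rs m) (ts (S m))) ->
  sp_converging arity prefix_reduction R (ts 0).
Proof.
  intros Hwf Hstep.
  refine (conj _ (conj _ (conj _ (conj _ (conj _ (conj _ (conj _ (conj _ _)))))))).
  - apply prefix_well_order.
  - intros [a Ha]. apply Hwf. cbn. lia.
  - apply Hwf. lia.
  - intros a Ha. cbn. rewrite (prefix_min a Ha). reflexivity.
  - intro He. cbn. rewrite (prefix_empty He). reflexivity.
  - intros a b Hab. cbn. rewrite (prefix_succ a b Hab). apply Hstep, proj2_sig.
  - intros a Ha. cbn.
    replace (ts N) with (ts (S (proj1_sig a))) by (rewrite (prefix_max a Ha); reflexivity).
    apply Hstep, proj2_sig.
  - intros l Hl. destruct (prefix_no_limit l Hl).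
  - intro Ho. destruct (prefix_not_open Ho).
Qed.

Lemma prefix_descendants :
  is_descendants prefix_reduction (Ds 0) (fun a => Ds (proj1_sig a)) (Ds N).
Proof.
  refine (conj _ (conj _ (conj _ (conj _ (conj _ _))))); cbn.
  - intros a Ha u. rewrite (prefix_min a Ha). reflexivity.
  - intros He u. rewrite (prefix_empty He). reflexivity.
  - intros a b Hab u. rewrite (prefix_succ a b Hab), Ds_succ. reflexivity.
  - intros a Ha u.
    replace (Ds N) with (Ds (S (proj1_sig a))) by (rewrite (prefix_max a Ha); reflexivity).
    rewrite Ds_succ. reflexivity.
  - intros l Hl. destruct (prefix_no_limit l Hl).
  - intro Ho. destruct (prefix_not_open Ho).
Qed.

Lemma prefix_complete_development :
  (forall m, m <= N -> wf (ts m)) ->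
  (forall m, m < N -> rstep R (ts m) (ps m) (rs m) (ts (S m)) /\ Ds m (ps m)) ->
  (forall u, ~ Ds N u) ->
  complete_development arity prefix_reduction R (ts 0) (Ds 0).
Proof.
  intros Hwf Hstep Hempty. split.
  - apply prefix_sp_converging; [exact Hwf|]. intros m Hm. apply Hstep, Hm.
  - exists (fun a => Ds (proj1_sig a)), (Ds N). split; [apply prefix_descendants|split].
    + intros [a Ha]. apply Hstep, Ha.
    + exact Hempty.
Qed.

End Prefix.

Section Omega.

Let ctxs (m : nat) : term := replace (ts m) (ps m) botterm.

Definition omega_reduction : reduction F V :=
  {| idx := nat; ilt := lt; tm := ts; pos := ps; rl := rs;
     fin := liminf_term (arity := arity) ctxs |}.

Lemma omega_min a : is_min omega_reduction a -> a = 0.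
Proof. destruct a as [|a]; intro H; [reflexivity|]. exfalso. apply (H 0). cbn. lia. Qed.

Lemma omega_succ a b : succ_of omega_reduction a b -> b = S a.
Proof.
  intros [Hab Hk]. cbn in *. destruct (Hk (S a) ltac:(lia)) as [E|E]; [exact E|lia].
Qed.

Lemma omega_no_max a : ~ is_max omega_reduction a.
Proof. intro H. apply (H (S a)). cbn. lia. Qed.

Lemma omega_no_limit l : ~ is_limit omega_reduction l.
Proof.
  destruct l as [|l]; intros [Hnm Hns].
  - apply Hnm. intro k. cbn. lia.
  - apply Hns. exists l. split; [cbn; lia|]. intros k Hk. cbn in *.
    destruct (Nat.eq_dec k (S l)); [left|right]; lia.
Qed.

Lemma omega_contexts_wf :
  (forall m, wf (ts m)) -> (forall m, rstep R (ts m) (ps m) (rs m) (ts (S m))) ->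
  forall m, wf (ctxs m).
Proof.
  intros Hwf Hstep m. destruct (Hstep m) as [Hr [sigma [Hs _]]].
  apply replace_wf; [apply Hwf|exact (redex_defined HR _ _ _ _ Hr Hs)|apply botterm_wf].
Qed.

Lemma omega_sp_converging :
  (forall m, wf (ts m)) -> (forall m, rstep R (ts m) (ps m) (rs m) (ts (S m))) ->
  sp_converging arity omega_reduction R (ts 0).
Proof.
  intros Hwf Hstep.
  pose proof (omega_contexts_wf Hwf Hstep) as Hctx.
  refine (conj _ (conj _ (conj _ (conj _ (conj _ (conj _ (conj _ (conj _ _)))))))); cbn.
  - refine (conj _ (conj _ (conj _ lt_wf))); cbn; [intro; lia|intros; lia|].
    intros a b. destruct (lt_eq_lt_dec a b) as [[H|H]|H]; auto.
  - exact Hwf.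
  - exact (liminf_term_wf _ Hctx).
  - intros a Ha. rewrite (omega_min a Ha). reflexivity.
  - intro He. destruct (He 0).
  - intros a b Hab. rewrite (omega_succ a b Hab). apply Hstep.
  - intros a Ha. destruct (omega_no_max a Ha).
  - intros l Hl. destruct (omega_no_limit l Hl).
  - intros _. exists (glb_from (arity := arity) ctxs). split.
    + intros b _. exact (glb_from_is_glb _ Hctx b).
    + exact (liminf_term_is_lub _ Hctx).
Qed.

Definition omega_residuals : pset :=
  lim_desc omega_reduction Ds (fun _ => True) (fin omega_reduction).

Lemma omega_descendants : is_descendants omega_reduction (Ds 0) Ds omega_residuals.
Proof.
  refine (conj _ (conj _ (conj _ (conj _ (conj _ _))))); cbn.
  - intros a Ha u. rewrite (omega_min a Ha). reflexivity.
  - intro He. destruct (He 0).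
  - intros a b Hab u. rewrite (omega_succ a b Hab), Ds_succ. reflexivity.
  - intros a Ha. destruct (omega_no_max a Ha).
  - intros l Hl. destruct (omega_no_limit l Hl).
  - intros _ u. reflexivity.
Qed.

(* A surviving residual [u] is a non-[SBot] position of the limit, hence stable in the
   contexts from some [b0] on; fairness contracts [u] at some later step [m], but then
   the context [ctxs m] has [SBot] at [u]. *)
Lemma omega_residuals_empty :
  (forall m, wf (ts m)) -> (forall m, rstep R (ts m) (ps m) (rs m) (ts (S m))) ->
  (forall u n, exists m, n <= m /\ (Ds m u -> ps m = u)) ->
  forall u, ~ omega_residuals u.
Proof.
  intros Hwf Hstep Hfair u [[x [Hx Hxb]] [b [_ Hb]]]. cbn in Hx.
  pose proof (omega_contexts_wf Hwf Hstep) as Hctx.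
  destruct (liminf_term_nonbot _ u x Hx Hxb) as [b0 [Hst Hv]].
  destruct (Hfair u (max b b0)) as [m [Hm Hpm]].
  assert (Hu : ps m = u) by (apply Hpm, Hb; [exact I|cbn; lia]).
  assert (Hbot : ctxs m u = Some SBot).
  { pose proof (replace_at (ts m) botterm (ps m) []) as E. rewrite app_nil_r in E.
    unfold ctxs. rewrite <- Hu. exact E. }
  rewrite (stable_val _ b0 u m Hst) in Hbot by lia. congruence.
Qed.

Lemma omega_complete_development :
  (forall m, wf (ts m)) ->
  (forall m, rstep R (ts m) (ps m) (rs m) (ts (S m)) /\ Ds m (ps m)) ->
  (forall u n, exists m, n <= m /\ (Ds m u -> ps m = u)) ->
  complete_development arity omega_reduction R (ts 0) (Ds 0).
Proof.
  intros Hwf Hstep Hfair. assert (Hrstep : forall m, rstep R (ts m) (ps m) (rs m) (ts (S m)))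
    by (intro m; apply Hstep).
  split; [exact (omega_sp_converging Hwf Hrstep)|].
  exists Ds, omega_residuals. split; [exact omega_descendants|split].
  - intro m. apply Hstep.
  - exact (omega_residuals_empty Hwf Hrstep Hfair).
Qed.

End Omega.
End Sequences.

Section Development.
Context {F V : Type} {arity : F -> nat} (R : rule F V -> Prop).
Hypothesis HR : left_linear_trs arity R.
Notation term := (term F V).
Notation wf := (wf arity).
Variables (t0 : term) (U : pset).
Hypothesis Ht0 : wf t0.
Hypothesis HU : forall u, U u -> redex_occ R t0 u.
Hypothesis Hnc : forall u v, U u -> U v -> ~ conflicting R t0 u v.

Definition pick_pos (D : pset) (n : nat) : list nat :=
  if excluded_middle_informative (D (enum_pos n)) then enum_pos n else epsilon (inhabits []) D.

Definition pick_redex (t : term) (pi : list nat) : rule F V * (V -> term) :=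
  epsilon (inhabits (Rule botterm botterm, fun _ => botterm))
          (fun rs => R (fst rs) /\ subterm t pi = subst (snd rs) (lhs (fst rs))).

Definition dev_step (n : nat) (s : term * pset) : term * pset :=
  let pi := pick_pos (snd s) n in
  let rs := pick_redex (fst s) pi in
  (replace (fst s) pi (subst (snd rs) (rhs (fst rs))), desc_step (fst rs) pi (snd s)).

Fixpoint dev_state (n : nat) : term * pset :=
  match n with 0 => (t0, U) | S n => dev_step n (dev_state n) end.

Definition dev_term (n : nat) : term := fst (dev_state n).
Definition dev_res (n : nat) : pset := snd (dev_state n).
Definition dev_pos (n : nat) : list nat := pick_pos (dev_res n) n.
Definition dev_rule (n : nat) : rule F V := fst (pick_redex (dev_term n) (dev_pos n)).

Lemma dev_res_succ n : dev_res (S n) = desc_step (dev_rule n) (dev_pos n) (dev_res n).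
Proof. reflexivity. Qed.

Lemma dev_fair u n : exists m, n <= m /\ (dev_res m u -> dev_pos m = u).
Proof.
  destruct (enum_pos_infinitely_often u n) as [m [Hm <-]]. exists m. split; [exact Hm|].
  intro H. unfold dev_pos, pick_pos. destruct (excluded_middle_informative _); tauto.
Qed.

Lemma independent_redexes_initial : independent_redexes R t0 U.
Proof.
  intros u Hu. destruct (HU u Hu) as [rho Hr]. exists rho. split; [exact Hr|].
  intros q Hq Hv Hp. apply (Hnc u (u ++ q) Hu Hv). split.
  - intro E. apply Hq. rewrite <- (app_nil_r u) in E at 1. apply app_inv_head in E. auto.
  - left. exists q, rho. auto.
Qed.

Lemma dev_step_spec n :
  wf (dev_term n) -> independent_redexes R (dev_term n) (dev_res n) -> (exists u, dev_res n u) ->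
  dev_res n (dev_pos n) /\ rstep R (dev_term n) (dev_pos n) (dev_rule n) (dev_term (S n)) /\
  wf (dev_term (S n)) /\ independent_redexes R (dev_term (S n)) (dev_res (S n)).
Proof.
  intros Hw HI Hne.
  assert (Hpos : dev_res n (dev_pos n)).
  { unfold dev_pos, pick_pos. destruct (excluded_middle_informative _); [assumption|].
    exact (epsilon_spec _ _ Hne). }
  assert (Hred : R (dev_rule n) /\
      subterm (dev_term n) (dev_pos n) =
        subst (snd (pick_redex (dev_term n) (dev_pos n))) (lhs (dev_rule n))).
  { apply (epsilon_spec _ (fun rs => R (fst rs) /\ _ = subst (snd rs) (lhs (fst rs)))).
    destruct (HI _ Hpos) as [rho [[Hr [sigma Hs]] _]]. exists (rho, sigma). auto. }
  destruct Hred as [Hr Hs]. split; [exact Hpos|split; [|split]].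
  - split; [exact Hr|]. eexists. split; [exact Hs|reflexivity].
  - exact (rstep_wf HR _ _ _ _ Hw Hr Hs).
  - exact (independent_redexes_rstep HR _ _ _ _ _ HI Hpos Hr Hs).
Qed.

Lemma dev_invariant n : (forall m, m < n -> exists u, dev_res m u) ->
  wf (dev_term n) /\ independent_redexes R (dev_term n) (dev_res n).
Proof.
  induction n as [|n IH]; intro Hne.
  - exact (conj Ht0 independent_redexes_initial).
  - destruct IH as [Hw HI]; [intros m Hm; apply Hne; lia|].
    destruct (dev_step_spec n Hw HI (Hne n ltac:(lia))) as [_ [_ H]]. exact H.
Qed.

Lemma dev_step_contracts_residual n : (forall m, m <= n -> exists u, dev_res m u) ->
  rstep R (dev_term n) (dev_pos n) (dev_rule n) (dev_term (S n)) /\ dev_res n (dev_pos n).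
Proof.
  intro Hne. destruct (dev_invariant n) as [Hw HI]; [intros m Hm; apply Hne; lia|].
  destruct (dev_step_spec n Hw HI (Hne n (le_n n))) as [H1 [H2 _]]. auto.
Qed.

End Development.

Theorem proposition5p17 (F V : Type) (arity : F -> nat) (R : rule F V -> Prop)
  (HR : left_linear_trs arity R)
  (t : term F V) (Ht : wf arity t)
  (U : pset)
  (HU : forall u, U u -> redex_occ R t u)
  (Hnc : forall u v, U u -> U v -> ~ conflicting R t u v) :
  exists S : reduction F V, complete_development arity S R t U.
Proof.
  set (ts := dev_term R t U). set (ps := dev_pos R t U). set (rs := dev_rule R t U).
  set (Ds := dev_res R t U).
  destruct (classic (exists N, forall u, ~ Ds N u)) as [Hfin|Hinf].
  - destruct (dec_inh_nat_subset_has_unique_least_element _ (fun n => classic _) Hfin)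
      as [N [[HN Hleast] _]].
    assert (Hne : forall m, m < N -> exists u, Ds m u).
    { intros m Hm. apply not_all_not_ex. intro H. specialize (Hleast m H). lia. }
    exists (prefix_reduction ts ps rs N).
    apply (prefix_complete_development ts ps rs Ds (dev_res_succ R t U)); [| |exact HN].
    + intros m Hm. apply (dev_invariant R HR t U Ht HU Hnc). intros k Hk. apply Hne. lia.
    + intros m Hm. apply (dev_step_contracts_residual R HR t U Ht HU Hnc).
      intros k Hk. apply Hne. lia.
  - assert (Hne : forall m, exists u, Ds m u).
    { intro m. apply not_all_not_ex. intro H. apply Hinf. exists m. exact H. }
    exists (omega_reduction (arity := arity) ts ps rs).
    apply (omega_complete_development HR ts ps rs Ds (dev_res_succ R t U)).
    + intro m. apply (dev_invariant R HR t U Ht HU Hnc). intros k _. apply Hne.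
    + intro m. apply (dev_step_contracts_residual R HR t U Ht HU Hnc). intros k _. apply Hne.
    + exact (dev_fair R t U).
Qed.
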